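(* Let $\mathbb{k}$ be a field of characteristic $p>0$ and $V$ a finite-dimensional $\mathbb{k}$-vector space. Let $\mathcal{I}(V)$ be the ideal of $\Gamma_{\mathbb{k}}(V)$ generated by $\Gamma^1_{\mathbb{k}}(V)=V$ and $\mathrm{gr}\,\Gamma(V)=\bigoplus_{n\ge0}\mathcal{I}(V)^n/\mathcal{I}(V)^{n+1}$. There is an isomorphism of $\mathcal{P}_{\mathbb{k}}$-algebras $\mathrm{gr}\,\Gamma(V)\simeq Q(V)\otimes\Gamma_{\mathbb{k}}(V^{(1)})$ which maps $\mathcal{I}(V)^n/\mathcal{I}(V)^{n+1}$ isomorphically onto $Q^n(V)\otimes\Gamma_{\mathbb{k}}(V^{(1)})$.
   Context: $\mathcal{P}_{\mathbb{k}}$-algebras are algebras whose homogeneous components of each weight are strict polynomial functors of $V$ over $\mathbb{k}$ and whose multiplication is a morphism of strict polynomial functors. $V^{(1)}$ is the Frobenius twist: the strict polynomial subfunctor of $S^p_{\mathbb{k}}(V)$ generated by $p$-th powers (weight $p$). $Q(V)$ is the truncated polynomial algebra, the quotient of $S_{\mathbb{k}}(V)$ by the ideal generated by $V^{(1)}\subset S^p_{\mathbb{k}}(V)$, and $Q^n(V)$ is its homogeneous component of degree $n$. *)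

From HB Require Import structures.
From mathcomp Require Import all_boot all_order all_algebra.
From mathcomp Require Export mpoly.
Set Implicit Arguments.
Unset Strict Implicit.
Unset Printing Implicit Defensive.
Import Order.TTheory GRing.Theory.
Local Open Scope ring_scope.

(* V = R^d with standard basis e_0..e_{d-1}.
   * Gamma_R(R^d) is represented by {mpoly R[d]}: the coefficient of 'X_[a]
     is the coefficient of the divided-power monomial
     gamma^a = gamma^{a_0}(e_0) ... gamma^{a_{d-1}}(e_{d-1});
     the product is the divided power product [dpmul].
   * S_R(R^d) is the ordinary {mpoly R[d]}; Q_R(R^d) = S/(V^(1)) is
     represented by normal forms: polynomials all of whose exponents are < p.
   * V^(1) has basis x_i^p; Gamma(V^(1)) is represented by {mpoly R[d]}
     in the same way as Gamma (variable i <-> x_i^p), of weight p per degree.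
   * Q(V) (x) Gamma(V^(1)) is represented by {mpoly R[d + d]}: the first d
     exponents are the Q-monomial, the last d the Gamma(V^(1))-monomial.
   * A linear map R^d -> R^e is a matrix M : 'M[R]_(d, e),
     e_i |-> \sum_j M i j f_j.                                            *)

Section Gamma.
Variables (R : comNzRingType) (d : nat).

(* coefficient of gamma^(a+b) in gamma^a * gamma^b *)
Definition dpc (a b : 'X_{1..d}) : nat := (\prod_(i < d) 'C(a i + b i, a i))%N.

Definition dpmul (f g : {mpoly R[d]}) : {mpoly R[d]} :=
  \sum_(a <- msupp f) \sum_(b <- msupp g)
     ((f@_a * g@_b) *+ dpc a b) *: 'X_[(a + b)%MM].

Definition dpprod (s : seq {mpoly R[d]}) : {mpoly R[d]} := foldr dpmul 1 s.

(* f lies in I(V)^n, I(V) the ideal generated by Gamma^1(V) = V: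
   I^n is spanned by the gamma^b * v_1 * ... * v_n with v_i basis vectors. *)
Definition Ipow (n : nat) (f : {mpoly R[d]}) : Prop :=
  exists s : seq ('X_{1..d} * n.-tuple 'I_d * R),
    f = \sum_(t <- s)
          t.2 *: dpmul 'X_[t.1.1] (dpprod [seq 'X_[(U_(i))%MM] | i <- t.1.2]).

Definition dphomog (w : nat) (f : {mpoly R[d]}) : bool :=
  all (fun a => mdeg a == w) (msupp f).

Definition qtrunc (p : nat) (f : {mpoly R[d]}) : {mpoly R[d]} :=
  \sum_(a <- msupp f | all (fun i => a i < p)%N (enum 'I_d)) f@_a *: 'X_[a].

Definition mjoin (a b : 'X_{1..d}) : 'X_{1..d + d} :=
  [multinom (match split i with inl j => a j | inr j => b j end) | i < d + d].
Definition mfst (m : 'X_{1..d + d}) : 'X_{1..d} := [multinom m (lshift d i) | i < d].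
Definition msnd (m : 'X_{1..d + d}) : 'X_{1..d} := [multinom m (rshift d i) | i < d].

Definition tens (u v : {mpoly R[d]}) : {mpoly R[d + d]} :=
  \sum_(a <- msupp u) \sum_(b <- msupp v) (u@_a * v@_b) *: 'X_[mjoin a b].

Definition tmul (p : nat) (t s : {mpoly R[d + d]}) : {mpoly R[d + d]} :=
  \sum_(a <- msupp t) \sum_(b <- msupp s)
    (t@_a * s@_b) *: tens (qtrunc p ('X_[mfst a] * 'X_[mfst b]))
                          (dpmul 'X_[msnd a] 'X_[msnd b]).

Definition isQGam (p : nat) (t : {mpoly R[d + d]}) : bool :=
  all (fun m => all (fun i => mfst m i < p)%N (enum 'I_d)) (msupp t).

Definition Qdeg (n : nat) (t : {mpoly R[d + d]}) : bool :=
  all (fun m => mdeg (mfst m) == n) (msupp t).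

Definition Tweight (p w : nat) (t : {mpoly R[d + d]}) : bool :=
  all (fun m => mdeg (mfst m) + p * mdeg (msnd m) == w)%N (msupp t).

End Gamma.

Section Functoriality.
Variables (R : comNzRingType) (d e : nat).

(* gamma^n (\sum_j c_j f_j) = \sum_{|b| = n} c^b gamma^b in Gamma_R(R^e) *)
Definition dppow (n : nat) (c : 'I_e -> R) : {mpoly R[e]} :=
  \sum_(b : 'X_{1..e < n.+1} | mdeg b == n)
     (\prod_(j < e) c j ^+ (bmnm b) j) *: 'X_[bmnm b].

Definition GammaMap (M : 'M[R]_(d, e)) (f : {mpoly R[d]}) : {mpoly R[e]} :=
  \sum_(a <- msupp f) f@_a *:
     dpprod [seq dppow (a i) (fun j => M i j) | i <- enum 'I_d].

Definition QMap (p : nat) (M : 'M[R]_(d, e)) (f : {mpoly R[d]}) : {mpoly R[e]} :=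
  qtrunc p (f \mPo [tuple \sum_(j < e) M i j *: 'X_j | i < d]).

(* Gamma(M^(1)) : V^(1)(M) sends x_i^p to (\sum_j M i j x_j)^p = \sum_j M i j ^p x_j^p *)
Definition Gamma1Map (p : nat) (M : 'M[R]_(d, e)) (f : {mpoly R[d]}) : {mpoly R[e]} :=
  GammaMap (map_mx (fun c => c ^+ p) M) f.

Definition TMap (p : nat) (M : 'M[R]_(d, e)) (t : {mpoly R[d + d]}) : {mpoly R[e + e]} :=
  \sum_(m <- msupp t) t@_m *:
     tens (QMap p M 'X_[mfst m]) (Gamma1Map p M 'X_[msnd m]).

End Functoriality.

(* base change of a k-linear map between monomial-based modules to R (x)_k - *)
Definition bc (k : fieldType) (R : comAlgType k) (d d' : nat)
  (F : {mpoly k[d]} -> {mpoly k[d']}) (g : {mpoly R[d]}) : {mpoly R[d']} :=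
  \sum_(a <- msupp g) g@_a *: map_mpoly (fun c : k => c%:A) (F 'X_[a]).

From HB Require Import structures.
From mathcomp Require Import all_boot all_order all_algebra.
From mathcomp Require Import mpoly.
From mathcomp Require Import ring.
Set Implicit Arguments.
Unset Strict Implicit.
Unset Printing Implicit Defensive.
Import GRing.Theory.
Local Open Scope ring_scope.

(* Write a multi-index a as r + p q with r = a mod p and q = a div p.  Up to the unit r!,
   the divided power gamma^a is x^r gamma^(p q), and by Lucas' theorem gamma^a gamma^b is
   zero unless adding r and r' produces no carry, in which case it is
   C(r + r', r) C(q + q', q) gamma^(a + b).  Hence the span of the gamma^a with |r| >= n is
   a multiplicative filtration; it is I(V)^n, because I(V) is generated by the basis vectors
   and such a gamma^a is, up to a unit, gamma^(a - c) times |c| = n basis vectors for any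
   c <= r.  Sending gamma^a to x^r / r! (x) gamma^q when |r| = n, and to 0 otherwise, is
   then multiplicative with kernel I^(n+1) and image Q^n (x) Gamma(V^(1)).  Naturality
   reduces by multiplicativity to gamma^m(v), which is sent to
   v^(m mod p) / (m mod p)! (x) gamma^(m div p)(v^(1)). *)

(** * Linear maps determined on monomials *)

Section LinearExtension.
Variable R : comNzRingType.

Definition mlin d d' (phi : 'X_{1..d} -> {mpoly R[d']}) (f : {mpoly R[d]}) :=
  \sum_(a <- msupp f) f@_a *: phi a.

Lemma mlin_seqE d d' (phi : 'X_{1..d} -> {mpoly R[d']}) f (s : seq 'X_{1..d}) :
  uniq s -> {subset msupp f <= s} -> mlin phi f = \sum_(a <- s) f@_a *: phi a.
Proof.
move=> s_uniq f_s; rewrite /mlin [RHS](bigID (mem (msupp f))) /=.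
rewrite [X in _ = _ + X]big1 ?addr0 => [|a /memN_msupp_eq0 ->]; last by rewrite scale0r.
rewrite -[in RHS]big_filter; apply/perm_big/uniq_perm; rewrite ?msupp_uniq ?filter_uniq //.
by move=> a; rewrite mem_filter; case: (boolP (a \in msupp f)) => // /f_s ->.
Qed.

Lemma mlin_is_linear d d' (phi : 'X_{1..d} -> {mpoly R[d']}) : linear (mlin phi).
Proof.
move=> c f g; set s := undup (msupp f ++ msupp g ++ msupp (c *: f + g)).
have sub_s a : a \in msupp f \/ a \in msupp g \/ a \in msupp (c *: f + g) -> a \in s.
  by rewrite mem_undup !mem_cat => -[->|[->|->]]; rewrite ?orbT.
rewrite !(@mlin_seqE _ _ _ _ s) ?undup_uniq // => [|a ha|a ha|a ha]; last 3 first.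
- by apply: sub_s; auto.
- by apply: sub_s; auto.
- by apply: sub_s; auto.
rewrite scaler_sumr -big_split; apply: eq_bigr => a _.
by rewrite mcoeffD mcoeffZ scalerDl scalerA.
Qed.

Lemma mlin0 d d' (phi : 'X_{1..d} -> {mpoly R[d']}) : mlin phi 0 = 0.
Proof. by rewrite /mlin msupp0 big_nil. Qed.

Lemma mlinD d d' (phi : 'X_{1..d} -> {mpoly R[d']}) f g :
  mlin phi (f + g) = mlin phi f + mlin phi g.
Proof. by have := mlin_is_linear phi 1 f g; rewrite !scale1r. Qed.

Lemma mlinZ d d' (phi : 'X_{1..d} -> {mpoly R[d']}) c f :
  mlin phi (c *: f) = c *: mlin phi f.
Proof. by rewrite -[c *: f]addr0 mlin_is_linear mlin0 addr0. Qed.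

Lemma mlin_sum d d' (phi : 'X_{1..d} -> {mpoly R[d']}) I (r : seq I) (P : pred I) F :
  mlin phi (\sum_(i <- r | P i) F i) = \sum_(i <- r | P i) mlin phi (F i).
Proof. exact: (big_morph _ (mlinD phi) (mlin0 phi)). Qed.

Lemma mlinX d d' (phi : 'X_{1..d} -> {mpoly R[d']}) a : mlin phi 'X_[a] = phi a.
Proof. by rewrite /mlin msuppX big_seq1 mcoeffX eqxx scale1r. Qed.

Lemma mlinX_id d (f : {mpoly R[d]}) : mlin (fun a => 'X_[a]) f = f.
Proof. by rewrite /mlin -mpolyE. Qed.

Lemma eq_mlin d d' (phi psi : 'X_{1..d} -> {mpoly R[d']}) f :
  {in msupp f, phi =1 psi} -> mlin phi f = mlin psi f.
Proof. by move=> eq_phi; apply: eq_big_seq => a /eq_phi ->. Qed.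

Lemma mlin_funDZ d d' (phi psi : 'X_{1..d} -> {mpoly R[d']}) c f :
  mlin (fun a => c *: phi a + psi a) f = c *: mlin phi f + mlin psi f.
Proof.
rewrite /mlin scaler_sumr -big_split; apply: eq_bigr => a _.
by rewrite scalerDr !scalerA mulrC.
Qed.

Lemma mlin_comp d d' d'' (phi : 'X_{1..d} -> {mpoly R[d']})
    (psi : 'X_{1..d'} -> {mpoly R[d'']}) f :
  mlin psi (mlin phi f) = mlin (fun a => mlin psi (phi a)) f.
Proof. by rewrite {1}[mlin phi f]/mlin mlin_sum; apply: eq_bigr => a _; rewrite mlinZ. Qed.

Lemma mcoeff_mlin d d' (phi : 'X_{1..d} -> {mpoly R[d']}) f m :
  (mlin phi f)@_m = \sum_(a <- msupp f) f@_a * (phi a)@_m.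
Proof.
rewrite /mlin (big_morph _ (@mcoeffD _ _ m) (@mcoeff0 _ _ m)).
by apply: eq_bigr => a _; rewrite mcoeffZ.
Qed.

Lemma all_msupp_mlin d d' (phi : 'X_{1..d} -> {mpoly R[d']}) f (Q : pred 'X_{1..d'}) :
  {in msupp f, forall a, all Q (msupp (phi a))} -> all Q (msupp (mlin phi f)).
Proof.
move=> Qphi; apply/allP => m /msupp_sum_le /flattenP [s /mapP [a ha ->]] /msuppZ_le.
by rewrite mem_filter in ha; case/andP: ha => _ /Qphi /allP; apply.
Qed.

Section LinearMap.
Variables (d d' : nat) (F : {mpoly R[d]} -> {mpoly R[d']}).
Hypothesis F_linear : linear F.

Lemma linear_mlinE f : F f = mlin (fun a => F 'X_[a]) f.
Proof.
have F0 : F 0 = 0.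
  have := F_linear 1 0 0; rewrite scaler0 addr0 scale1r => /(congr1 (fun x => x - F 0)).
  by rewrite subrr addrK.
have FD x y : F (x + y) = F x + F y by have := F_linear 1 x y; rewrite !scale1r.
rewrite {1}(mpolyE f) (big_morph _ FD F0); apply: eq_bigr => a _.
by rewrite -[_ *: 'X_[a]]addr0 F_linear F0 addr0.
Qed.

Lemma linear_map0 : F 0 = 0.
Proof. by rewrite linear_mlinE mlin0. Qed.

Lemma linear_mapZ c f : F (c *: f) = c *: F f.
Proof. by rewrite linear_mlinE mlinZ -linear_mlinE. Qed.

Lemma linear_map_sum I (r : seq I) (P : pred I) G :
  F (\sum_(i <- r | P i) G i) = \sum_(i <- r | P i) F (G i).
Proof. by rewrite linear_mlinE mlin_sum; apply: eq_bigr => i _; rewrite -linear_mlinE. Qed.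

Lemma linear_map_mlin d0 (phi : 'X_{1..d0} -> {mpoly R[d]}) f :
  F (mlin phi f) = mlin (fun a => F (phi a)) f.
Proof. by rewrite linear_mlinE mlin_comp; apply: eq_mlin => a _; rewrite -linear_mlinE. Qed.

End LinearMap.

Lemma linear_map_ext d d' (F G : {mpoly R[d]} -> {mpoly R[d']}) :
  linear F -> linear G -> (forall a, F 'X_[a] = G 'X_[a]) -> F =1 G.
Proof.
move=> F_lin G_lin FG f; rewrite (linear_mlinE F_lin) (linear_mlinE G_lin).
exact: eq_mlin.
Qed.

Lemma linear_map_comp d1 d2 d3 (G : {mpoly R[d2]} -> {mpoly R[d3]})
    (H : {mpoly R[d1]} -> {mpoly R[d2]}) :
  linear G -> linear H -> linear (fun x => G (H x)).
Proof. by move=> G_lin H_lin c f g; rewrite H_lin G_lin. Qed.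

Lemma mulr_linearl d (y : {mpoly R[d]}) : linear (fun x => x * y).
Proof. by move=> c f g; rewrite mulrDl scalerAl. Qed.

Lemma mulr_linearr d (y : {mpoly R[d]}) : linear (fun x => y * x).
Proof. by move=> c f g; rewrite mulrDr scalerAr. Qed.

End LinearExtension.

(** * Binomial coefficients modulo p *)

Lemma prime_ndvd_fact p m : prime p -> (m < p)%N -> ~~ (p %| m`!)%N.
Proof.
move=> p_pr; elim: m => [|m IHm] lt_mp; first by rewrite fact0 dvdn1 neq_ltn prime_gt1 ?orbT.
rewrite factS Euclid_dvdM // negb_or IHm ?(ltnW lt_mp) // andbT.
by rewrite gtnNdvd.
Qed.

Lemma prime_ndvd_bin p n m : prime p -> (n < p)%N -> (m <= n)%N -> ~~ (p %| 'C(n, m))%N.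
Proof.
move=> p_pr lt_np le_mn; apply: contra (prime_ndvd_fact p_pr lt_np) => p_dvd.
by rewrite -(bin_fact le_mn) dvdn_mulr.
Qed.

Section Lucas.
Variables (R : comNzRingType) (p : nat).
Hypothesis charR : p \in [pchar R].

Let p_pr : prime p. Proof. exact: pcharf_prime charR. Qed.
Let p_gt0 : (0 < p)%N. Proof. exact: prime_gt0 p_pr. Qed.

Lemma coef_binomial n m : (('X + 1 : {poly R}) ^+ n)`_m = 'C(n, m)%:R.
Proof.
rewrite exprD1n coef_sum (bigID (fun i : 'I_n.+1 => i == m :> nat)) /=.
rewrite [X in _ + X]big1 => [|i /negbTE im]; last by rewrite coefMn coefXn eq_sym im mul0rn.
rewrite addr0 (big_ord1_eq _ (fun j => ('X ^+ j *+ 'C(n, j))`_m)) /=.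
rewrite coefMn coefXn eqxx mulr1n.
by case: ltnP => // lt_nm; rewrite bin_small.
Qed.

(* Lucas' theorem, peeling off the last base-p digit. *)
Lemma lucas_bin n m :
  'C(n, m)%:R = ('C(n %/ p, m %/ p) * 'C(n %% p, m %% p))%:R :> R.
Proof.
have frobenius : ('X + 1 : {poly R}) ^+ p = 'X^p + 1.
  have charP : p \in [pchar {poly R}] by rewrite pchar_poly.
  by rewrite exprDn_pchar ?expr1n // (eq_pnat _ (pcharf_eq charP)) pnat_id.
rewrite -coef_binomial {1}(divn_eq n p) exprD mulnC exprM frobenius exprD1n mulr_suml.
rewrite coef_sum (bigID (fun i : 'I_ _ => i == (m %/ p)%N :> nat)) /=.
rewrite [X in _ + X]big1 => [|i im]; last first.
  rewrite mulrnAl coefMn -exprM coefXnM coef_binomial.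
  case: ltnP => le_pi_m; rewrite ?mul0rn // bin_small ?mul0rn //.
  have lt_i : (i < m %/ p)%N by rewrite ltn_neqAle im /= leq_divRL // mulnC.
  rewrite (leq_trans (_ : n %% p < p)%N) ?ltn_mod // leq_subRL // -mulnSr.
  by rewrite (leq_trans _ (leq_divM m p)) // mulnC leq_mul2r lt_i orbT.
rewrite addr0 (big_ord1_eq _ (fun j =>
  ('X^p ^+ j *+ 'C(n %/ p, j) * ('X + 1) ^+ (n %% p))`_m)) /=.
rewrite mulrnAl coefMn -exprM coefXnM coef_binomial.
rewrite [(p * _)%N]mulnC [(m < _)%N]ltnNge leq_divM /= [X in (X - _)%N](divn_eq m p) addKn.
case: ltnP => [_|lt_q]; first by rewrite natrM mulr_natl.
by rewrite bin_small.
Qed.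

Lemma binD_lucas a b : 'C(a + b, a)%:R =
  (if (a %% p + b %% p < p)%N
   then 'C(a %% p + b %% p, a %% p) * 'C(a %/ p + b %/ p, a %/ p) else 0)%:R :> R.
Proof.
rewrite lucas_bin divnD // modnD //; case: ltnP => carry /=.
  by rewrite addn0 mul0n subn0 mulnC.
rewrite mul1n (@bin_small (_ - p)) ?muln0 //.
by rewrite ltn_subLR // addnC ltn_add2r ltn_mod.
Qed.

Lemma bin_modp_neq0 a m : (m <= a %% p)%N -> 'C(a, m)%:R != 0 :> R.
Proof.
move=> le_m_amod; have lt_mp : (m < p)%N by rewrite (leq_ltn_trans le_m_amod) ?ltn_mod.
rewrite lucas_bin (divn_small lt_mp) (modn_small lt_mp) bin0 mul1n.
by rewrite -(dvdn_pcharf charR) prime_ndvd_bin // ltn_mod.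
Qed.

Lemma fact_neq0 m : (m < p)%N -> m`!%:R != 0 :> R.
Proof. by move=> lt_mp; rewrite -(dvdn_pcharf charR) prime_ndvd_fact. Qed.

End Lucas.

Section TensorExponents.
Variable d : nat.
Implicit Types a b : 'X_{1..d}.

Lemma mfst_mjoin a b : mfst (mjoin a b) = a.
Proof.
apply/mnmP => i; rewrite !mnmE.
by rewrite -[lshift d i]/(unsplit (inl i)) unsplitK.
Qed.

Lemma msnd_mjoin a b : msnd (mjoin a b) = b.
Proof.
apply/mnmP => i; rewrite !mnmE.
by rewrite -[rshift d i]/(unsplit (inr i)) unsplitK.
Qed.

Lemma mjoinK (m : 'X_{1..d + d}) : mjoin (mfst m) (msnd m) = m.
Proof.
apply/mnmP => i; rewrite mnmE.
by rewrite -{2}(splitK i); case: (split i) => j /=; rewrite mnmE.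
Qed.

Lemma mjoin_eq a b a' b' : (mjoin a b == mjoin a' b') = (a == a') && (b == b').
Proof.
apply/eqP/andP => [eq_ab|[/eqP-> /eqP->] //].
split; apply/eqP; first by rewrite -(mfst_mjoin a b) eq_ab mfst_mjoin.
by rewrite -(msnd_mjoin a b) eq_ab msnd_mjoin.
Qed.

Lemma mjoin0 : mjoin (0%MM : 'X_{1..d}) 0%MM = 0%MM.
Proof. by apply/mnmP => i; rewrite !mnmE; case: split => j; rewrite mnmE. Qed.

Lemma mjoinD a b a' b' : mjoin (a + a') (b + b') = (mjoin a b + mjoin a' b')%MM.
Proof. by apply/mnmP => i; rewrite !mnmE; case: split => j; rewrite mnmE. Qed.

End TensorExponents.

Lemma mnm_le_mdeg d (m : 'X_{1..d}) j : (m j <= mdeg m)%N.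
Proof. by rewrite mdegE (bigD1 j) //= leq_addr. Qed.

Section BasePExponents.
Variable p : nat.
Hypothesis p_gt0 : (0 < p)%N.

Definition mmodp d (a : 'X_{1..d}) := [multinom (a i %% p)%N | i < d].
Definition mdivp d (a : 'X_{1..d}) := [multinom (a i %/ p)%N | i < d].
Definition rdeg d (a : 'X_{1..d}) := mdeg (mmodp a).
Definition reducedp d (a : 'X_{1..d}) := all (fun i => a i < p)%N (enum 'I_d).
Definition nocarry d (a b : 'X_{1..d}) := [forall i, a i %% p + b i %% p < p]%N.

Lemma reducedpP d (a : 'X_{1..d}) : reflect (forall i, a i < p)%N (reducedp a).
Proof. by apply: (iffP allP) => lt_ap i; rewrite ?lt_ap ?mem_enum. Qed.

Lemma mmodp_mdivp d (a : 'X_{1..d}) : (mmodp a + mdivp a *+ p)%MM = a.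
Proof. by apply/mnmP => i; rewrite mnmDE mulmnE !mnmE addnC -divn_eq. Qed.

Lemma reducedp_mmodp d (a : 'X_{1..d}) : reducedp (mmodp a).
Proof. by apply/reducedpP => i; rewrite mnmE ltn_mod. Qed.

Lemma mmodp_reducedp d (s t : 'X_{1..d}) : reducedp s -> mmodp (s + t *+ p)%MM = s.
Proof.
move/reducedpP => lt_sp; apply/mnmP => i; rewrite mnmE mnmDE mulmnE.
by rewrite addnC modnMDl modn_small.
Qed.

Lemma mdivp_reducedp d (s t : 'X_{1..d}) : reducedp s -> mdivp (s + t *+ p)%MM = t.
Proof.
move/reducedpP => lt_sp; apply/mnmP => i; rewrite mnmE mnmDE mulmnE.
by rewrite addnC divnMDl // divn_small // addn0.
Qed.

Lemma mmodp_mdivp_eq d (a s t : 'X_{1..d}) :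
  (mmodp a == s) && (mdivp a == t) = (a == (s + t *+ p)%MM) && reducedp s.
Proof.
apply/andP/andP => [[/eqP<- /eqP<-] | [/eqP-> s_red]].
  by rewrite mmodp_mdivp eqxx reducedp_mmodp.
by rewrite mmodp_reducedp ?mdivp_reducedp.
Qed.

Lemma rdeg_reducedp d (s t : 'X_{1..d}) : reducedp s -> rdeg (s + t *+ p)%MM = mdeg s.
Proof. by move=> s_red; rewrite /rdeg mmodp_reducedp. Qed.

Lemma mdeg_rdeg d (a : 'X_{1..d}) : mdeg a = (rdeg a + p * mdeg (mdivp a))%N.
Proof. by rewrite -{1}(mmodp_mdivp a) mdegD mdegMn mulnC. Qed.

Lemma mdeg_modp_le_rdeg d (a : 'X_{1..d}) : (mdeg a %% p <= rdeg a)%N.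
Proof.
rewrite /rdeg !mdegE -modn_summ (leq_trans (leq_mod _ _)) //.
by apply: leq_sum => i _; rewrite mnmE.
Qed.

Lemma rdegU d (i : 'I_d) : (1 < p)%N -> rdeg U_(i)%MM = 1%N.
Proof.
move=> p_gt1; rewrite /rdeg mdegE (bigD1 i) //= big1 => [|j ji].
  by rewrite mnmE mnm1E eqxx modn_small ?addn0.
by rewrite mnmE mnm1E eq_sym (negbTE ji) mod0n.
Qed.

Lemma mdivp0 d : mdivp 0%MM = 0%MM :> 'X_{1..d}.
Proof. by apply/mnmP => i; rewrite !mnmE div0n. Qed.

Lemma mmodp0 d : mmodp 0%MM = 0%MM :> 'X_{1..d}.
Proof. by apply/mnmP => i; rewrite !mnmE mod0n. Qed.

Lemma nocarryP d (a b : 'X_{1..d}) :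
  reflect (forall i, a i %% p + b i %% p < p)%N (nocarry a b).
Proof. exact: forallP. Qed.

Lemma reducedp_mmodpD d (a b : 'X_{1..d}) : reducedp (mmodp a + mmodp b)%MM = nocarry a b.
Proof. by apply/reducedpP/nocarryP => nc i; have := nc i; rewrite mnmDE !mnmE. Qed.

Lemma mmodpD d (a b : 'X_{1..d}) : nocarry a b -> mmodp (a + b)%MM = (mmodp a + mmodp b)%MM.
Proof.
move/nocarryP => nc; apply/mnmP => i; rewrite !mnmE modnD //.
by rewrite leqNgt nc mul0n subn0.
Qed.

Lemma mdivpD d (a b : 'X_{1..d}) : nocarry a b -> mdivp (a + b)%MM = (mdivp a + mdivp b)%MM.
Proof.
move/nocarryP => nc; apply/mnmP => i; rewrite !mnmE divnD //.
by rewrite leqNgt nc addn0.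
Qed.

Lemma rdegD d (a b : 'X_{1..d}) : nocarry a b -> rdeg (a + b)%MM = (rdeg a + rdeg b)%N.
Proof. by move=> nc; rewrite /rdeg mmodpD // mdegD. Qed.

End BasePExponents.

Section StructureMaps.
Variables (R : comNzRingType) (p : nat).
Hypothesis p_gt0 : (0 < p)%N.

Lemma dpmulE d (f g : {mpoly R[d]}) :
  dpmul f g = mlin (fun a => mlin (fun b => (dpc a b)%:R *: 'X_[(a + b)%MM]) g) f.
Proof.
rewrite /dpmul /mlin; apply: eq_bigr => a _; rewrite scaler_sumr.
by apply: eq_bigr => b _; rewrite !scalerA mulr_natr.
Qed.

Lemma dpmulXX d (a b : 'X_{1..d}) : dpmul 'X_[R, a] 'X_[b] = (dpc a b)%:R *: 'X_[(a + b)%MM].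
Proof. by rewrite dpmulE !mlinX. Qed.

Lemma dpmul_linearl d (g : {mpoly R[d]}) : linear (fun f => dpmul f g).
Proof. by move=> c f h; rewrite !dpmulE mlin_is_linear. Qed.

Lemma dpmul_linearr d (f : {mpoly R[d]}) : linear (dpmul f).
Proof.
move=> c g h; rewrite !dpmulE -mlin_funDZ.
by apply: eq_mlin => a _; rewrite mlin_is_linear.
Qed.

Lemma tensE d (u v : {mpoly R[d]}) :
  tens u v = mlin (fun a => mlin (fun b => 'X_[mjoin a b]) v) u.
Proof.
rewrite /tens /mlin; apply: eq_bigr => a _; rewrite scaler_sumr.
by apply: eq_bigr => b _; rewrite scalerA.
Qed.

Lemma tensXX d (a b : 'X_{1..d}) : tens 'X_[R, a] 'X_[b] = 'X_[mjoin a b].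
Proof. by rewrite tensE !mlinX. Qed.

Lemma tens_linearl d (v : {mpoly R[d]}) : linear (fun u => tens u v).
Proof. by move=> c f h; rewrite !tensE mlin_is_linear. Qed.

Lemma tens_linearr d (u : {mpoly R[d]}) : linear (tens u).
Proof.
move=> c g h; rewrite !tensE -mlin_funDZ.
by apply: eq_mlin => a _; rewrite mlin_is_linear.
Qed.

Lemma tens11 d : tens (1 : {mpoly R[d]}) 1 = 1.
Proof. by rewrite -!mpolyX0 tensXX mjoin0. Qed.

Lemma tmulE d (t s : {mpoly R[d + d]}) :
  tmul p t s = mlin (fun a => mlin (fun b =>
    tens (qtrunc p ('X_[mfst a] * 'X_[mfst b])) (dpmul 'X_[msnd a] 'X_[msnd b])) s) t.
Proof.
rewrite /tmul /mlin; apply: eq_bigr => a _; rewrite scaler_sumr.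
by apply: eq_bigr => b _; rewrite scalerA.
Qed.

Lemma tmul_linearl d (s : {mpoly R[d + d]}) : linear (fun t => tmul p t s).
Proof. by move=> c f h; rewrite !tmulE mlin_is_linear. Qed.

Lemma tmul_linearr d (t : {mpoly R[d + d]}) : linear (tmul p t).
Proof.
move=> c g h; rewrite !tmulE -mlin_funDZ.
by apply: eq_mlin => a _; rewrite mlin_is_linear.
Qed.

Lemma qtruncE d (f : {mpoly R[d]}) :
  qtrunc p f = mlin (fun a => if reducedp p a then 'X_[a] else 0) f.
Proof.
rewrite /qtrunc /mlin big_mkcond; apply: eq_bigr => a _.
by rewrite /reducedp; case: ifP; rewrite ?scaler0.
Qed.

Lemma qtruncX d (a : 'X_{1..d}) : qtrunc p 'X_[R, a] = if reducedp p a then 'X_[a] else 0.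
Proof. by rewrite qtruncE mlinX. Qed.

Lemma qtrunc_linear d : linear (@qtrunc R d p).
Proof. by move=> c f g; rewrite !qtruncE mlin_is_linear. Qed.

Lemma qtrunc1 d : qtrunc p (1 : {mpoly R[d]}) = 1.
Proof. by rewrite -mpolyX0 qtruncX ifT //; apply/reducedpP => j; rewrite mnm0E. Qed.

Lemma tmulXX d (r q r' q' : 'X_{1..d}) :
  tmul p 'X_[R, mjoin r q] 'X_[mjoin r' q'] =
  tens (qtrunc p 'X_[(r + r')%MM]) ((dpc q q')%:R *: 'X_[(q + q')%MM]).
Proof. by rewrite tmulE !mlinX !mfst_mjoin !msnd_mjoin mpolyXD dpmulXX. Qed.

(* A product of monomials is truncated to zero as soon as one factor is. *)
Lemma qtrunc_mul d (x y : {mpoly R[d]}) :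
  qtrunc p (qtrunc p x * qtrunc p y) = qtrunc p (x * y).
Proof.
have lin_qt := @qtrunc_linear d.
move: x; apply: linear_map_ext => [||a].
- exact: linear_map_comp lin_qt (linear_map_comp (mulr_linearl _) lin_qt).
- exact: linear_map_comp lin_qt (mulr_linearl _).
move: y; apply: linear_map_ext => [||b].
- exact: linear_map_comp lin_qt (linear_map_comp (mulr_linearr _) lin_qt).
- exact: linear_map_comp lin_qt (mulr_linearr _).
rewrite !qtruncX -mpolyXD qtruncX.
have [a_red|a_nred] := boolP (reducedp p a); last first.
  rewrite mul0r (linear_map0 lin_qt) ifN //; apply: contra a_nred => /reducedpP lt_ab.
  by apply/reducedpP => j; apply: leq_ltn_trans (lt_ab j); rewrite mnmDE leq_addr.
have [b_red|b_nred] := boolP (reducedp p b); last first.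
  rewrite mulr0 (linear_map0 lin_qt) ifN //; apply: contra b_nred => /reducedpP lt_ab.
  by apply/reducedpP => j; apply: leq_ltn_trans (lt_ab j); rewrite mnmDE leq_addl.
by rewrite -mpolyXD qtruncX.
Qed.

Lemma tmul_tens d (u v u' v' : {mpoly R[d]}) :
  tmul p (tens u v) (tens u' v') = tens (qtrunc p (u * u')) (dpmul v v').
Proof.
have lin_qt := @qtrunc_linear d.
move: u; apply: linear_map_ext => [||a].
- exact: linear_map_comp (tmul_linearl _) (tens_linearl _).
- exact: linear_map_comp (tens_linearl _) (linear_map_comp lin_qt (mulr_linearl _)).
move: v; apply: linear_map_ext => [||b].
- exact: linear_map_comp (tmul_linearl _) (tens_linearr _).
- exact: linear_map_comp (tens_linearr _) (dpmul_linearl _).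
move: u'; apply: linear_map_ext => [||a'].
- exact: linear_map_comp (tmul_linearr _) (tens_linearl _).
- exact: linear_map_comp (tens_linearl _) (linear_map_comp lin_qt (mulr_linearr _)).
move: v'; apply: linear_map_ext => [||b'].
- exact: linear_map_comp (tmul_linearr _) (tens_linearr _).
- exact: linear_map_comp (tens_linearr _) (dpmul_linearr _).
by rewrite !tensXX tmulXX mpolyXD dpmulXX.
Qed.

End StructureMaps.

Section GradedMap.
Variables (R : comNzRingType) (p : nat).
Hypothesis charR : p \in [pchar R].
(* Inverses of the factorials below p; over a k-algebra R they are taken from k, which
   makes the map below commute with base change. *)
Variable invf : nat -> R.
Hypothesis invfK : forall m, (m < p)%N -> invf m * m`!%:R = 1.

Let p_pr : prime p. Proof. exact: pcharf_prime charR. Qed.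
Let p_gt0 : (0 < p)%N. Proof. exact: prime_gt0 p_pr. Qed.

Local Notation rdeg := (rdeg p).
Local Notation mmodp := (mmodp p).
Local Notation mdivp := (mdivp p).
Local Notation nocarry := (nocarry p).

Definition invmfact d (s : 'X_{1..d}) : R := \prod_(i < d) invf (s i).

(* The monomial description of I(V)^n, see [Ipow_filt] and [filt_Ipow]. *)
Definition filt d n (f : {mpoly R[d]}) := all (fun a => n <= rdeg a)%N (msupp f).

(* Writing a = r + p q with r = mmodp a, the map sends gamma^a = gamma^r gamma^(pq)
   to (x^r / r!) (x) gamma^q when |r| = n. *)
Definition grmap d n (f : {mpoly R[d]}) : {mpoly R[d + d]} :=
  mlin (fun a => if rdeg a == n
                 then invmfact (mmodp a) *: 'X_[mjoin (mmodp a) (mdivp a)] else 0) f.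

Lemma dpc_lucas d (a b : 'X_{1..d}) : (dpc a b)%:R =
  (if nocarry a b then dpc (mmodp a) (mmodp b) * dpc (mdivp a) (mdivp b) else 0)%N%:R :> R.
Proof.
rewrite /dpc natr_prod; case: ifP => [/nocarryP nc | /negbT].
  rewrite natrM !natr_prod -big_split /=; apply: eq_bigr => i _.
  by rewrite (binD_lucas charR) !mnmE nc natrM.
rewrite negb_forall => /existsP [i carry].
by rewrite (bigD1 i) //= (binD_lucas charR) (negbTE carry) mul0r.
Qed.

Lemma invf_binD x y : (x + y < p)%N -> invf (x + y) * 'C(x + y, x)%:R = invf x * invf y.
Proof.
move=> lt_xy_p.
have lt_xp : (x < p)%N by apply: leq_ltn_trans lt_xy_p; apply: leq_addr.
have lt_yp : (y < p)%N by apply: leq_ltn_trans lt_xy_p; apply: leq_addl.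
have bin_xy : ('C(x + y, x) * (x`! * y`!))%N = (x + y)`!.
  by have := bin_fact (leq_addr y x); rewrite addKn.
transitivity (invf (x + y) * 'C(x + y, x)%:R * ((invf x * x`!%:R) * (invf y * y`!%:R))).
  by rewrite !invfK // !mulr1.
transitivity ((invf (x + y) * (x + y)`!%:R) * (invf x * invf y)).
  by rewrite -bin_xy !natrM; ring.
by rewrite invfK // mul1r.
Qed.

Lemma invmfactD d (a b : 'X_{1..d}) : nocarry a b ->
  invmfact (mmodp a + mmodp b)%MM * (dpc (mmodp a) (mmodp b))%:R
  = invmfact (mmodp a) * invmfact (mmodp b).
Proof.
move/nocarryP => nc; rewrite /invmfact /dpc natr_prod -!big_split /=.
by apply: eq_bigr => i _; rewrite mnmDE invf_binD // !mnmE.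
Qed.

Lemma invmfact0 d : invmfact (0%MM : 'X_{1..d}) = 1.
Proof.
rewrite /invmfact big1 // => i _; rewrite mnm0E.
by have := invfK p_gt0; rewrite fact0 mulr1.
Qed.

Lemma filt0 d n : filt n (0 : {mpoly R[d]}).
Proof. by rewrite /filt msupp0. Qed.

Lemma filtD d n (f g : {mpoly R[d]}) : filt n f -> filt n g -> filt n (f + g).
Proof.
move=> /allP nf /allP ng; apply/allP => a /msuppD_le.
by rewrite mem_cat => /orP [/nf|/ng].
Qed.

Lemma filtZ d n c (f : {mpoly R[d]}) : filt n f -> filt n (c *: f).
Proof. by move=> /allP nf; apply/allP => a /msuppZ_le /nf. Qed.

Lemma filt_sum d n I (r : seq I) (P : pred I) (F : I -> {mpoly R[d]}) :
  (forall i, P i -> filt n (F i)) -> filt n (\sum_(i <- r | P i) F i).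
Proof. by move=> nF; apply: (big_ind (filt n)) => //; [exact: filt0 | exact: filtD]. Qed.

Lemma filtX d n (a : 'X_{1..d}) : (n <= rdeg a)%N -> filt n 'X_[a].
Proof. by move=> le_na; rewrite /filt msuppX /= le_na. Qed.

Lemma filt_le d n m (f : {mpoly R[d]}) : (n <= m)%N -> filt m f -> filt n f.
Proof. by move=> le_nm /allP mf; apply/allP => a /mf /(leq_trans le_nm). Qed.

Lemma filt_dpmul d n m (f g : {mpoly R[d]}) :
  filt n f -> filt m g -> filt (n + m)%N (dpmul f g).
Proof.
move=> /allP nf /allP mg; rewrite dpmulE; apply: all_msupp_mlin => a /nf le_na.
apply: all_msupp_mlin => b /mg le_mb.
rewrite dpc_lucas; case: ifP => nc; last by rewrite scale0r msupp0.
apply/allP => c /msuppZ_le; rewrite msuppX inE => /eqP ->.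
by rewrite rdegD // leq_add.
Qed.

Lemma grmapX d n (a : 'X_{1..d}) : grmap n 'X_[a] =
  if rdeg a == n then invmfact (mmodp a) *: 'X_[mjoin (mmodp a) (mdivp a)] else 0.
Proof. exact: mlinX. Qed.

Lemma grmap_linear d n : linear (@grmap d n).
Proof. by move=> c f g; rewrite /grmap mlin_is_linear. Qed.

Lemma all_msupp_grmap d n (f : {mpoly R[d]}) (Q : pred 'X_{1..d + d}) :
  {in msupp f, forall a, rdeg a = n -> Q (mjoin (mmodp a) (mdivp a))} ->
  all Q (msupp (grmap n f)).
Proof.
move=> Q_f; apply: all_msupp_mlin => a a_f; case: eqP => [/(Q_f a a_f) Q_a|_].
  by apply/allP => m /msuppZ_le; rewrite msuppX inE => /eqP ->.
by rewrite msupp0.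
Qed.

Lemma grmap_filt d n (f : {mpoly R[d]}) : filt n.+1 f -> grmap n f = 0.
Proof.
move=> /allP nf; rewrite /grmap /mlin big1_seq // => a /nf lt_na.
by rewrite (gtn_eqF lt_na) scaler0.
Qed.

Lemma grmap1 d : grmap 0 (1 : {mpoly R[d]}) = 1.
Proof.
by rewrite -mpolyX0 grmapX /rdeg !mmodp0 mdivp0 mdeg0 eqxx invmfact0 scale1r mjoin0 mpolyX0.
Qed.

Lemma grmap_dpmulXX d n m (a b : 'X_{1..d}) : (n <= rdeg a)%N -> (m <= rdeg b)%N ->
  grmap (n + m)%N (dpmul 'X_[a] 'X_[b]) = tmul p (grmap n 'X_[a]) (grmap m 'X_[b]).
Proof.
move=> le_na le_mb.
have tmulZZ c c' (s t : {mpoly R[d + d]}) : tmul p (c *: s) (c' *: t) = c * c' *: tmul p s t.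
  by rewrite (linear_mapZ (tmul_linearl p _)) (linear_mapZ (tmul_linearr p _)) scalerA.
have tmul0l (t : {mpoly R[d + d]}) : tmul p 0 t = 0 := linear_map0 (tmul_linearl p t).
have tmul0r (t : {mpoly R[d + d]}) : tmul p t 0 = 0 := linear_map0 (tmul_linearr p t).
rewrite dpmulXX (linear_mapZ (@grmap_linear _ _)) !grmapX.
have [nc|carry] := boolP (nocarry a b); last first.
  rewrite dpc_lucas (negbTE carry) scale0r.
  case: eqP => _; last by rewrite tmul0l.
  case: eqP => _; last by rewrite tmul0r.
  rewrite tmulZZ tmulXX qtruncX reducedp_mmodpD (negbTE carry).
  by rewrite (linear_map0 (tens_linearl _)) scaler0.
rewrite rdegD //.
have [ea|/negbTE na] := eqVneq (rdeg a) n; last first.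
  by rewrite tmul0l gtn_eqF ?scaler0 // -addSn leq_add // ltn_neqAle eq_sym na.
have [eb|/negbTE nb] := eqVneq (rdeg b) m; last first.
  by rewrite tmul0r gtn_eqF ?scaler0 // -addnS leq_add // ltn_neqAle eq_sym nb.
rewrite ea eb eqxx mmodpD // mdivpD // tmulZZ tmulXX qtruncX reducedp_mmodpD nc.
rewrite (linear_mapZ (tens_linearr _)) tensXX !scalerA mjoinD.
congr (_ *: _); rewrite dpc_lucas nc natrM -(invmfactD nc).
by ring.
Qed.

Lemma grmap_dpmul d n m (f g : {mpoly R[d]}) : filt n f -> filt m g ->
  grmap (n + m)%N (dpmul f g) = tmul p (grmap n f) (grmap m g).
Proof.
move=> /allP nf /allP mg.
rewrite dpmulE (linear_map_mlin (@grmap_linear _ _)) {2}/grmap.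
rewrite (linear_map_mlin (tmul_linearl p _)); apply: eq_mlin => a /nf le_na.
rewrite (linear_map_mlin (@grmap_linear _ _)) {2}/grmap (linear_map_mlin (tmul_linearr p _)).
apply: eq_mlin => b /mg le_mb.
by rewrite -!grmapX -dpmulXX grmap_dpmulXX.
Qed.

End GradedMap.

(** * The powers of I(V) *)

Definition mcount d (l : seq 'I_d) : 'X_{1..d} := (\sum_(i <- l) U_(i))%MM.

Lemma mcount_cons d (i : 'I_d) l : mcount (i :: l) = (U_(i) + mcount l)%MM.
Proof. by rewrite /mcount big_cons. Qed.

Lemma mdeg_mcount d (l : seq 'I_d) : mdeg (mcount l) = size l.
Proof. by rewrite /mcount mdeg_sum -sum1_size; apply: eq_bigr => i _; rewrite mdeg1. Qed.

Section IpowFilt.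
Variables (R : comNzRingType) (p : nat).
Hypothesis charR : p \in [pchar R].

Lemma filt_dpprodU d (l : seq 'I_d) :
  filt p (size l) (dpprod [seq 'X_[R, U_(i)] | i <- l]).
Proof.
have p_gt1 := prime_gt1 (pcharf_prime charR).
elim: l => [|i l IHl] /=; first by rewrite -mpolyX0; apply: filtX.
by rewrite -add1n; apply: (filt_dpmul charR) => //; apply: filtX; rewrite rdegU.
Qed.

Lemma Ipow_filt d n (f : {mpoly R[d]}) : Ipow n f -> filt p n f.
Proof.
case=> s ->; apply: filt_sum => t _; apply: filtZ.
apply: (@filt_le _ _ _ _ (0 + n)%N) => //; apply: (filt_dpmul charR); first exact: filtX.
by have := filt_dpprodU (tval t.1.2); rewrite size_tuple.
Qed.

End IpowFilt.

Section FiltIpow.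
Variables (k : fieldType) (p : nat).
Hypothesis charp : p \in [pchar k].

Let p_gt0 : (0 < p)%N. Proof. exact: prime_gt0 (pcharf_prime charp). Qed.

Lemma dpprodU d (l : seq 'I_d) : dpprod [seq 'X_[k, U_(i)] | i <- l] =
  (\prod_(j < d) (mcount l j)`!)%:R *: 'X_[mcount l].
Proof.
elim: l => [|i l IHl] /=.
  by rewrite /mcount big_nil big1 ?scale1r ?mpolyX0 // => j _; rewrite mnm0E.
rewrite IHl (linear_mapZ (dpmul_linearr _)) dpmulXX scalerA -natrM mcount_cons.
congr (_%:R *: _); rewrite /dpc -big_split /=; apply: eq_bigr => j _.
rewrite mnmDE mnm1E; case: (i == j); last by rewrite bin0 muln1.
by rewrite add1n bin1 factS mulnC.
Qed.

Lemma exists_mcount d (a : 'X_{1..d}) n : (n <= rdeg p a)%N ->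
  exists2 l : seq 'I_d, size l = n & forall j, (mcount l j <= a j %% p)%N.
Proof.
elim: n => [|n IHn] lt_na.
  by exists [::] => // j; rewrite /mcount big_nil mnm0E.
have [l size_l le_l] := IHn (ltnW lt_na).
have [j lt_j] : exists j, (mcount l j < a j %% p)%N.
  have [/existsP //|] := boolP [exists j, mcount l j < a j %% p]%N.
  rewrite negb_exists => /forallP ge_l; move: lt_na; rewrite ltnNge -size_l -mdeg_mcount.
  by rewrite /rdeg !mdegE leq_sum // => j _; rewrite mnmE leqNgt ge_l.
exists (j :: l) => [|j']; first by rewrite /= size_l.
rewrite mcount_cons mnmDE mnm1E; case: eqP => [<-|_]; first by rewrite add1n.
by rewrite add0n.
Qed.

Lemma IpowX d n (a : 'X_{1..d}) : (n <= rdeg p a)%N -> Ipow n 'X_[k, a].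
Proof.
move=> /exists_mcount [l size_l le_l].
have size_l_n : size l == n by rewrite size_l.
have le_la : (mcount l <= a)%MM.
  by apply/mnm_lepP => j; apply: leq_trans (le_l j) (leq_mod _ _).
set b := (a - mcount l)%MM.
set c : k := (\prod_(j < d) (mcount l j)`!)%:R * (dpc b (mcount l))%:R.
have c_neq0 : c != 0.
  rewrite mulf_neq0 // /dpc natr_prod; apply/prodf_neq0 => j _.
    by apply: (fact_neq0 charp); rewrite (leq_ltn_trans (le_l j)) ?ltn_mod.
  have le_ja : (mcount l j <= a j)%N by rewrite (leq_trans (le_l j)) // leq_mod.
  by rewrite /b mnmBE subnK // bin_sub // (bin_modp_neq0 charp).
exists [:: (b, Tuple size_l_n, c^-1)]; rewrite big_seq1 /=.
rewrite dpprodU (linear_mapZ (dpmul_linearr _)) dpmulXX scalerA /b submK //.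
by rewrite scalerA mulVf // scale1r.
Qed.

Lemma filt_Ipow d n (f : {mpoly k[d]}) : filt p n f -> Ipow n f.
Proof.
move=> /allP nf; rewrite (mpolyE f) big_seq.
apply: (big_ind (@Ipow k d n)) => [|g h [s ->] [s' ->]|a /nf /IpowX [s ->]].
- by exists [::]; rewrite big_nil.
- by exists (s ++ s'); rewrite big_cat.
exists [seq (t.1, f@_a * t.2) | t <- s].
by rewrite big_map scaler_sumr; apply: eq_bigr => t _; rewrite scalerA.
Qed.

End FiltIpow.

(** * Divided powers of linear forms *)

Section Coefficients.
Variable R : comNzRingType.

Lemma mcoeff_msupp_sum d (f : {mpoly R[d]}) m :
  f@_m = \sum_(a <- msupp f) f@_a * (a == m)%:R.
Proof. by rewrite -{1}(mlinX_id f) mcoeff_mlin; apply: eq_bigr => a _; rewrite mcoeffX. Qed.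

Lemma mcoeff_tens d (u v : {mpoly R[d]}) s t : (tens u v)@_(mjoin s t) = u@_s * v@_t.
Proof.
rewrite tensE mcoeff_mlin [u@_s]mcoeff_msupp_sum mulr_suml; apply: eq_bigr => a _.
rewrite mcoeff_mlin [v@_t]mcoeff_msupp_sum !mulr_sumr; apply: eq_bigr => b _.
by rewrite mcoeffX mjoin_eq -mulnb natrM; ring.
Qed.

Lemma mcoeff_bsum e n (w : 'X_{1..e} -> R) m :
  (\sum_(b : 'X_{1..e < n.+1} | mdeg b == n) w b *: 'X_[bmnm b])@_m =
  if mdeg m == n then w m else 0.
Proof.
rewrite (big_morph _ (@mcoeffD _ _ m) (@mcoeff0 _ _ m)).
under eq_bigr do rewrite mcoeffZ mcoeffX.
have [deg_m|] := eqVneq (mdeg m) n; last first.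
  move=> deg_m; rewrite big1 // => b /eqP deg_b.
  rewrite (_ : bmnm b == m = false) ?mulr0 //.
  by apply: contraNF deg_m => /eqP <-; apply/eqP.
have lt_m : (mdeg m < n.+1)%N by rewrite deg_m.
rewrite (bigD1 (BMultinom lt_m)) ?deg_m //= eqxx mulr1.
rewrite big1 ?addr0 // => b /andP [_ b_neq].
rewrite (_ : bmnm b == m = false) ?mulr0 //.
by apply: contraNF b_neq => /eqP eq_bm; apply/eqP/val_inj.
Qed.

End Coefficients.

Section LinearForms.
Variable R : comNzRingType.

Definition mpow e (c : 'I_e -> R) (b : 'X_{1..e}) : R := \prod_(j < e) c j ^+ b j.
Definition linform e (c : 'I_e -> R) : {mpoly R[e]} := \sum_(j < e) c j *: 'X_j.

Lemma mpow0 e (c : 'I_e -> R) : mpow c 0%MM = 1.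
Proof. by rewrite /mpow big1 // => j _; rewrite mnm0E expr0. Qed.

Lemma mpowD e (c : 'I_e -> R) a b : mpow c (a + b)%MM = mpow c a * mpow c b.
Proof. by rewrite /mpow -big_split; apply: eq_bigr => j _; rewrite mnmDE exprD. Qed.

Lemma mpowMn e (c : 'I_e -> R) a n : mpow c (a *+ n)%MM = mpow (fun j => c j ^+ n) a.
Proof. by apply: eq_bigr => j _; rewrite mulmnE mulnC exprM. Qed.

Lemma mpowU e (c : 'I_e -> R) j : mpow c U_(j)%MM = c j.
Proof.
rewrite /mpow (bigD1 j) //= big1 ?mulr1 => [|i ij]; first by rewrite mnm1E eqxx expr1.
by rewrite mnm1E eq_sym (negbTE ij) expr0.
Qed.

Lemma mcoeff_dppow e n (c : 'I_e -> R) m :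
  (dppow n c)@_m = if mdeg m == n then mpow c m else 0.
Proof. exact: (@mcoeff_bsum R e n (mpow c) m). Qed.

Lemma mcoeffXM e (u : 'X_{1..e}) (S : {mpoly R[e]}) m :
  ('X_[u] * S)@_m = if (u <= m)%MM then S@_(m - u)%MM else 0.
Proof.
case: ifP => le_um; first by rewrite mulrC -{1}(submK le_um) addmC mcoeffMX.
rewrite {1}(mpolyE S) mulr_sumr (big_morph _ (@mcoeffD _ _ m) (@mcoeff0 _ _ m)).
rewrite big1 // => b _; rewrite -scalerAr -mpolyXD mcoeffZ mcoeffX.
case: eqP => [eq_m|]; rewrite ?mulr0 //.
by rewrite -eq_m lem_addr in le_um.
Qed.

End LinearForms.

Section DividedPowersOfLinearForms.
Variables (R : comNzRingType) (p : nat).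
Hypothesis charR : p \in [pchar R].
Variable invf : nat -> R.
Hypothesis invfK : forall m, (m < p)%N -> invf m * m`!%:R = 1.

Let p_gt0 : (0 < p)%N. Proof. exact: prime_gt0 (pcharf_prime charR). Qed.

Local Notation invmfact := (invmfact invf).
Local Notation grmap := (grmap p invf).

(* The r-th divided power of [linform c] computed in S(V); for r < p it equals
   [linform c ^+ r / r`!], see [linform_exp]. *)
Definition sdppow e r (c : 'I_e -> R) : {mpoly R[e]} :=
  \sum_(b : 'X_{1..e < r.+1} | mdeg b == r) (invmfact b * mpow c b) *: 'X_[bmnm b].

Lemma mcoeff_sdppow e r (c : 'I_e -> R) m :
  (sdppow r c)@_m = if mdeg m == r then invmfact m * mpow c m else 0.
Proof. exact: (@mcoeff_bsum R e r (fun b => invmfact b * mpow c b) m). Qed.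

Lemma invf_pred x : (0 < x < p)%N -> invf x.-1 = x%:R * invf x.
Proof.
case/andP => x_gt0 lt_xp; have lt_x1p : (x.-1 < p)%N by rewrite (leq_ltn_trans (leq_pred x)).
transitivity (invf x.-1 * (invf x * x`!%:R)); first by rewrite invfK // mulr1.
rewrite -(prednK x_gt0) factS natrM prednK //.
transitivity (x%:R * invf x * (invf x.-1 * x.-1`!%:R)); first by ring.
by rewrite invfK // mulr1.
Qed.

Lemma invmfact_subU e (m : 'X_{1..e}) j : (U_(j) <= m)%MM -> (forall i, m i < p)%N ->
  invmfact (m - U_(j))%MM = (m j)%:R * invmfact m.
Proof.
move=> le_Um lt_mp; rewrite /invmfact (bigD1 j) //= [in RHS](bigD1 j) //= mulrA.
rewrite mnmBE mnm1E eqxx subn1 invf_pred; last by rewrite lt_mp lt0n -lep1mP le_Um.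
congr (_ * _); apply: eq_bigr => i ij; by rewrite mnmBE mnm1E eq_sym (negbTE ij) subn0.
Qed.

Lemma linform_exp e (c : 'I_e -> R) r : (r < p)%N -> linform c ^+ r = r`!%:R *: sdppow r c.
Proof.
elim: r => [|r IHr] lt_rp; apply/mpolyP => m; rewrite mcoeffZ mcoeff_sdppow.
  rewrite expr0 mcoeff1 fact0 mul1r mdeg_eq0.
  by case: eqP => [->|]; rewrite ?mulr0 // (invmfact0 charR invfK) mpow0 mulr1.
rewrite exprS IHr ?(ltnW lt_rp) // -scalerAr mcoeffZ.
rewrite /linform mulr_suml (big_morph _ (@mcoeffD _ _ m) (@mcoeff0 _ _ m)).
under eq_bigr do rewrite -scalerAl mcoeffZ mcoeffXM.
transitivity (r`!%:R * \sum_(j < e)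
    (if mdeg m == r.+1 then (m j)%:R * (invmfact m * mpow c m) else 0)).
  congr (_ * _); apply: eq_bigr => j _.
  case: ifP => [le_Um|]; last first.
    by move/negbT; rewrite lep1mP negbK => /eqP ->; rewrite mulr0 mul0r if_same.
  have deg_m : mdeg m = (mdeg (m - U_(j)) + 1)%N by rewrite -(mdeg1 j) -mdegD submK.
  rewrite mcoeff_sdppow deg_m addn1 eqSS; case: ifP => [/eqP deg_mU|]; last by rewrite mulr0.
  have lt_mp i : (m i < p)%N.
    by rewrite (leq_ltn_trans (mnm_le_mdeg m i)) // deg_m addn1 deg_mU.
  have -> : mpow c m = mpow c (m - U_(j))%MM * c j by rewrite -mpowU -mpowD submK.
  by rewrite invmfact_subU //; ring.
rewrite -big_mkcond /=; case: ifP => [/eqP deg_m|]; last by rewrite big1 ?mulr0.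
by rewrite -mulr_suml -natr_sum -mdegE deg_m factS natrM; ring.
Qed.

Lemma qtrunc_sdppow e r (c : 'I_e -> R) : (r < p)%N -> qtrunc p (sdppow r c) = sdppow r c.
Proof.
move=> lt_rp; rewrite (linear_map_sum (@qtrunc_linear R p e)); apply: eq_bigr => b deg_b.
rewrite (linear_mapZ (@qtrunc_linear R p e)) qtruncX ifT //; apply/reducedpP => j.
by rewrite (leq_ltn_trans (mnm_le_mdeg _ j)) // (eqP deg_b).
Qed.

Lemma mcoeff_grmap d n (f : {mpoly R[d]}) s t :
  (grmap n f)@_(mjoin s t) =
  if reducedp p s && (mdeg s == n) then invmfact s * f@_(s + t *+ p)%MM else 0.
Proof.
rewrite /grmap mcoeff_mlin [f@__]mcoeff_msupp_sum mulr_sumr.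
case: ifP => [/andP [s_red /eqP deg_s]|not_red_deg]; last first.
  rewrite big1 // => a _; case: ifP => [/eqP deg_a|_]; last by rewrite mcoeff0 mulr0.
  rewrite mcoeffZ mcoeffX mjoin_eq mmodp_mdivp_eq //.
  have [eq_a|] := eqVneq a (s + t *+ p)%MM; last by rewrite !mulr0.
  have [s_red|] := boolP (reducedp p s); last by rewrite !mulr0.
  by move: not_red_deg; rewrite s_red -deg_a eq_a rdeg_reducedp // eqxx.
apply: eq_bigr => a _; case: ifP => [_|/negbT deg_a].
  rewrite mcoeffZ mcoeffX mjoin_eq mmodp_mdivp_eq // s_red andbT.
  have [->|] := eqVneq a (s + t *+ p)%MM; last by rewrite !mulr0.
  by rewrite mmodp_reducedp //; ring.
rewrite mcoeff0 mulr0; have [eq_a|] := eqVneq a (s + t *+ p)%MM; last by rewrite !mulr0.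
by move: deg_a; rewrite eq_a rdeg_reducedp // deg_s eqxx.
Qed.

(* The key computation: gamma^m(v) = gamma^(m %% p)(v) gamma^(p (m %/ p))(v) maps to
   v^(m %% p) / (m %% p)! (x) gamma^(m %/ p)(v^(1)). *)
Lemma grmap_dppow e m (c : 'I_e -> R) :
  grmap (m %% p)%N (dppow m c) =
  invf (m %% p)%N *: tens (qtrunc p (linform c ^+ (m %% p)%N))
                        (dppow (m %/ p)%N (fun j => c j ^+ p)).
Proof.
have lt_rp : (m %% p < p)%N by rewrite ltn_mod.
rewrite linform_exp // (linear_mapZ (@qtrunc_linear R p e)) qtrunc_sdppow //.
rewrite (linear_mapZ (tens_linearl _)) scalerA invfK // scale1r.
apply/mpolyP => st; rewrite -(mjoinK st) mcoeff_grmap mcoeff_tens.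
rewrite mcoeff_sdppow !mcoeff_dppow; move: (mfst st) (msnd st) => s t.
have [deg_s|] := eqVneq (mdeg s) (m %% p)%N; last by rewrite andbF mul0r.
have s_red : reducedp p s.
  by apply/reducedpP => j; rewrite (leq_ltn_trans (mnm_le_mdeg _ j)) // deg_s.
rewrite s_red mdegD mdegMn deg_s [X in (_ + _ == X)%N](divn_eq m p) addnC eqn_add2r.
rewrite eqn_pmul2r //.
by case: eqP => _; rewrite ?mulr0 // mpowD mpowMn; ring.
Qed.

Lemma filt_dppow e m (c : 'I_e -> R) : filt p (m %% p)%N (dppow m c).
Proof.
apply: filt_sum => b /eqP deg_b; apply: filtZ; apply: filtX.
by rewrite -[X in (X %% p <= _)%N]deg_b mdeg_modp_le_rdeg.
Qed.

Lemma filt_dpprod e (L : seq (nat * ('I_e -> R))) :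
  filt p (\sum_(x <- L) x.1 %% p)%N (dpprod [seq dppow x.1 x.2 | x <- L]).
Proof.
elim: L => [|x L IHL] /=; first by rewrite big_nil -mpolyX0; apply: filtX.
by rewrite big_cons; apply: (filt_dpmul charR) => //; apply: filt_dppow.
Qed.

Lemma grmap_dpprod e (L : seq (nat * ('I_e -> R))) :
  grmap (\sum_(x <- L) x.1 %% p)%N (dpprod [seq dppow x.1 x.2 | x <- L]) =
  (\prod_(x <- L) invf (x.1 %% p)%N) *:
    tens (qtrunc p (\prod_(x <- L) linform x.2 ^+ (x.1 %% p)%N))
         (dpprod [seq dppow (x.1 %/ p)%N (fun j => x.2 j ^+ p) | x <- L]).
Proof.
elim: L => [|x L IHL] /=.
  by rewrite !big_nil (grmap1 charR invfK) scale1r qtrunc1 // tens11.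
rewrite !big_cons (grmap_dpmul charR invfK (filt_dppow _ _) (filt_dpprod L)) IHL.
rewrite grmap_dppow (linear_mapZ (tmul_linearl p _)) (linear_mapZ (tmul_linearr p _)).
by rewrite scalerA tmul_tens qtrunc_mul.
Qed.

End DividedPowersOfLinearForms.

Section FieldCase.
Variables (k : fieldType) (p : nat).
Hypothesis charp : p \in [pchar k].

Let p_gt0 : (0 < p)%N. Proof. exact: prime_gt0 (pcharf_prime charp). Qed.

Definition invfact (m : nat) : k := m`!%:R^-1.

Lemma invfactK m : (m < p)%N -> invfact m * m`!%:R = 1.
Proof. by move=> lt_mp; rewrite mulVf // (fact_neq0 charp). Qed.

Lemma grmap_surjective d n (t : {mpoly k[d + d]}) : isQGam p t -> Qdeg n t ->
  exists2 f, Ipow n f & grmap p invfact n f = t.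
Proof.
move=> /allP t_red /allP t_deg.
pose lift (st : 'X_{1..d + d}) :=
  (\prod_(j < d) (mfst st j)`!)%:R *: 'X_[(mfst st + msnd st *+ p)%MM] : {mpoly k[d]}.
exists (mlin lift t).
  apply: (filt_Ipow charp); apply: all_msupp_mlin => st /[dup] /t_red s_red /t_deg deg_s.
  apply/allP => b /msuppZ_le; rewrite msuppX inE => /eqP ->.
  by rewrite rdeg_reducedp // (eqP deg_s).
rewrite (linear_map_mlin (grmap_linear p invfact n)) -[RHS]mlinX_id.
apply: eq_mlin => st /[dup] /t_red s_red /t_deg /eqP deg_s.
rewrite /lift (linear_mapZ (grmap_linear p invfact n)) grmapX rdeg_reducedp // deg_s eqxx.
rewrite mmodp_reducedp // mdivp_reducedp // mjoinK.
rewrite scalerA -[RHS]scale1r; congr (_ *: _).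
rewrite /invmfact natr_prod -big_split /=; apply: big1 => j _.
by rewrite mulrC invfactK //; move/reducedpP: s_red.
Qed.

Lemma grmap_eq0 d n (f : {mpoly k[d]}) : Ipow n f -> (grmap p invfact n f = 0 <-> Ipow n.+1 f).
Proof.
move=> /(Ipow_filt charp) f_n; split; last by move/(Ipow_filt charp); exact: grmap_filt.
move=> f0; apply: (filt_Ipow charp); apply/allP => a a_f.
rewrite ltn_neqAle (allP f_n a a_f) andbT; apply/negP => /eqP deg_a.
have := congr1 (mcoeff (mjoin (mmodp p a) (mdivp p a))) f0.
rewrite mcoeff0 (mcoeff_grmap charp invfact) reducedp_mmodp //.
rewrite deg_a /rdeg eqxx mmodp_mdivp => /eqP; apply/negP; rewrite mulf_neq0 -?mcoeff_msupp //.
apply/prodf_neq0 => j _; rewrite invr_eq0 (fact_neq0 charp) //.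
by rewrite mnmE ltn_mod.
Qed.

Section Naturality.
Variable R : comAlgType k.

Let charR : p \in [pchar R]. Proof. by rewrite (pchar_lalg R). Qed.

Definition invfact_alg (m : nat) : R := (invfact m)%:A.

Lemma invfact_algK m : (m < p)%N -> invfact_alg m * m`!%:R = 1.
Proof.
move=> lt_mp; rewrite /invfact_alg -(rmorph_nat (GRing.in_alg R)) /=.
by rewrite -scalerAl mul1r scalerA invfactK // scale1r.
Qed.

Lemma bc_grmap d n (g : {mpoly R[d]}) :
  bc (@grmap _ p invfact d n) g = grmap p invfact_alg n g.
Proof.
rewrite /bc [in RHS]/grmap /mlin; apply: eq_bigr => a _; congr (_ *: _); rewrite grmapX.
rewrite -[map_mpoly _](_ : map_mpoly (GRing.in_alg R) = _) //.
case: ifP => _; last by rewrite raddf0.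
by rewrite map_mpolyZ map_mpolyX /invmfact rmorph_prod.
Qed.

Lemma grmap_natural d e (M : 'M[R]_(d, e)) n (f : {mpoly R[d]}) : Ipow n f ->
  bc (@grmap _ p invfact e n) (GammaMap M f) = TMap p M (bc (@grmap _ p invfact d n) f).
Proof.
move=> /(Ipow_filt charR) /allP f_n; rewrite !bc_grmap.
rewrite [GammaMap M f]/GammaMap -/(mlin _ f) (linear_map_mlin (grmap_linear p invfact_alg n)).
rewrite [TMap _ _ _]/TMap -/(mlin _ _) {2}/grmap mlin_comp.
apply: eq_mlin => a /f_n le_na.
set L := [seq (a i, fun j => M i j) | i <- enum 'I_d].
have -> : [seq dppow (a i) (fun j => M i j) | i <- enum 'I_d] = [seq dppow x.1 x.2 | x <- L].
  by rewrite /L; elim: (enum _) => //= i s ->.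
have rdeg_L : (\sum_(x <- L) x.1 %% p)%N = rdeg p a.
  by rewrite big_map big_enum /rdeg mdegE; apply: eq_bigr => i _; rewrite mnmE.
have [deg_a|ne_a] := eqVneq (rdeg p a) n; last first.
  rewrite mlin0 grmap_filt //; apply: (@filt_le _ _ _ _ (\sum_(x <- L) x.1 %% p)%N).
    by rewrite rdeg_L ltn_neqAle eq_sym ne_a le_na.
  exact: (filt_dpprod charR).
rewrite mlinZ mlinX mfst_mjoin msnd_mjoin -{1}deg_a -rdeg_L (grmap_dpprod charR invfact_algK).
congr (_ *: tens _ _).
- by rewrite /L big_map big_enum /invmfact; apply: eq_bigr => i _; rewrite mnmE.
- rewrite /QMap comp_mpolyX /L big_map big_enum; congr (qtrunc p _).
  by apply: eq_bigr => i _; rewrite tnth_mktuple mnmE.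
- rewrite /Gamma1Map /GammaMap -/(mlin _ _) mlinX /L -map_comp; congr dpprod.
  apply: eq_map => i /=; rewrite mnmE; apply: eq_bigr => b _.
  by congr (_ *: _); apply: eq_bigr => j _; rewrite mxE.
Qed.

End Naturality.

End FieldCase.

Theorem proposition4p9 (k : fieldType) (p : nat) (charp : p \in [pchar k]) :
  exists psi : forall d : nat, nat -> {mpoly k[d]} -> {mpoly k[d + d]},
    (forall d n (a : k) (f g : {mpoly k[d]}),
        psi d n (a *: f + g) = a *: psi d n f + psi d n g) /\
    (forall d n (f : {mpoly k[d]}), Ipow n f ->
        isQGam p (psi d n f) /\ Qdeg n (psi d n f)) /\
    (forall d n (t : {mpoly k[d + d]}), isQGam p t -> Qdeg n t ->
        exists2 f, Ipow n f & psi d n f = t) /\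
    (forall d n (f : {mpoly k[d]}), Ipow n f -> (psi d n f = 0 <-> Ipow n.+1 f)) /\
    (forall d, psi d 0%N 1 = 1) /\
    (forall d n m (f g : {mpoly k[d]}), Ipow n f -> Ipow m g ->
        psi d (n + m)%N (dpmul f g) = tmul p (psi d n f) (psi d m g)) /\
    (forall d n w (f : {mpoly k[d]}), Ipow n f -> dphomog w f ->
        Tweight p w (psi d n f)) /\
    (forall (R : comAlgType k) d e (M : 'M[R]_(d, e)) n (f : {mpoly R[d]}),
        Ipow n f ->
        bc (psi e n) (GammaMap M f) = TMap p M (bc (psi d n) f)).
Proof.
have p_gt0 := prime_gt0 (pcharf_prime charp).
exists (fun d n f => grmap p (invfact k) n f); split; first exact: grmap_linear.
split.
  move=> d n f _; split; apply: all_msupp_grmap => a _ deg_a; rewrite mfst_mjoin.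
    exact: reducedp_mmodp.
  by apply/eqP.
split; first exact: (grmap_surjective charp).
split; first exact: (grmap_eq0 charp).
split; first exact: (grmap1 charp (invfactK charp)).
split.
  move=> d n m f g /(Ipow_filt charp) f_n /(Ipow_filt charp) g_m.
  exact: (grmap_dpmul charp (invfactK charp)).
split; last exact: (grmap_natural charp).
move=> d n w f _ /allP f_w; apply: all_msupp_grmap => a a_f _.
by rewrite mfst_mjoin msnd_mjoin -mdeg_rdeg (f_w a a_f).
Qed.
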